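(* Let $u_{1:T}=(u_1,\ldots,u_T)\in(\mathbb{R}^d)^T$, let $1\le k\le T$ and $\tau\in[0:T-k]$, and let $w_{1:T}$ be obtained from $u_{1:T}$ by local averaging: $w_t=u_t$ for $t\notin[\tau+1:\tau+k]$ and $w_{\tau+1}=\cdots=w_{\tau+k}=k^{-1}\sum_{i=1}^k u_{\tau+i}$. Let $\bar u=T^{-1}\sum_t u_t$ and $\bar w=T^{-1}\sum_t w_t$. Then 1. $\sum_{t=1}^{T-1}\|w_{t+1}-w_t\|_2\le\sum_{t=1}^{T-1}\|u_{t+1}-u_t\|_2$; 2. $\sum_{t=1}^T\|w_t-\bar w\|_2\le\sum_{t=1}^T\|u_t-\bar u\|_2$; 3. $\sum_{t=1}^T\|w_t-\bar w\|_2^2\le\sum_{t=1}^T\|u_t-\bar u\|_2^2$; 4. $\sum_{t=1}^T\|w_t\|_2\le\sum_{t=1}^T\|u_t\|_2$ and $\sum_{t=1}^T\|w_t\|_2^2\le\sum_{t=1}^T\|u_t\|_2^2$. *)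

(* vectors in R^d are row vectors 'rV[R]_d over a real closed
   field R (the reals are an instance). Sequences u_{1:T} are nat-indexed,
   only indices 1..T are used. *)
From HB Require Import structures.
From mathcomp Require Import all_boot all_order all_algebra.
Set Implicit Arguments. Unset Strict Implicit. Unset Printing Implicit Defensive.
Import Order.TTheory GRing.Theory Num.Theory.
Local Open Scope ring_scope.

Definition norm2 (R : rcfType) (d : nat) (v : 'rV[R]_d) : R :=
  Num.sqrt (\sum_(j < d) (v ord0 j) ^+ 2).

Definition local_avg (R : rcfType) (d : nat) (u : nat -> 'rV[R]_d)
    (k tau : nat) : nat -> 'rV[R]_d :=
  fun t => if ((tau < t) && (t <= tau + k))%N
           then (k%:R)^-1 *: \sum_(1 <= i < k.+1) u (tau + i)%N
           else u t.

Definition seq_mean (R : rcfType) (d : nat) (u : nat -> 'rV[R]_d) (T : nat)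
  : 'rV[R]_d := (T%:R)^-1 *: \sum_(1 <= t < T.+1) u t.

(* Averaging changes u only on the block, so each sum splits into an unchanged
   outer part and the block part.  For the sums of norms and squared norms of
   u_t - c, the triangle inequality (followed by Cauchy-Schwarz for squares)
   bounds k copies of the block mean by the block itself; as averaging
   preserves the overall mean, the same c = ū serves for both sequences.  In
   the total variation only the jumps into and out of the block survive; their
   sum is at most the average over i of the detour u_tau -> u_(tau+i) ->
   u_(tau+k+1), each of which is bounded by the variation of u across the
   block. *)
From HB Require Import structures.
From mathcomp Require Import all_boot all_order all_algebra.
From mathcomp Require Import ring lra zify.
Import Order.TTheory GRing.Theory Num.Theory.
Local Open Scope ring_scope.

Lemma sqr_sum_mul_le {R : realDomainType} {I : Type} (r : seq I) (a b : I -> R) :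
  (\sum_(i <- r) a i * b i) ^+ 2
    <= (\sum_(i <- r) a i ^+ 2) * (\sum_(i <- r) b i ^+ 2).
Proof.
set P := _ * _; set Q := _ ^+ 2.
have lagrange : (P - Q) *+ 2 =
    \sum_(i <- r) \sum_(j <- r) (a i * b j - a j * b i) ^+ 2.
  have P1 : P = \sum_(i <- r) \sum_(j <- r) a i ^+ 2 * b j ^+ 2.
    by rewrite /P big_distrlr.
  have P2 : P = \sum_(i <- r) \sum_(j <- r) a j ^+ 2 * b i ^+ 2.
    by rewrite /P mulrC big_distrlr; apply: eq_bigr => i _; apply: eq_bigr => j _;
      rewrite mulrC.
  have Q1 : Q = \sum_(i <- r) \sum_(j <- r) (a i * b i) * (a j * b j).
    by rewrite /Q expr2 big_distrlr.
  rewrite mulrnBl mulr2n {1}P1 P2 Q1 -big_split -sumrMnl -sumrB /=.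
  apply: eq_bigr => i _; rewrite -big_split -sumrMnl -sumrB.
  by apply: eq_bigr => j _ /=; ring.
rewrite -subr_ge0 -(pmulrn_lge0 _ (ltn0Sn 1)) lagrange.
by apply: sumr_ge0 => i _; apply: sumr_ge0 => j _; exact: sqr_ge0.
Qed.

Lemma sqr_sum_le_size {R : realDomainType} {I : Type} (r : seq I) (y : I -> R) :
  (\sum_(i <- r) y i) ^+ 2 <= (size r)%:R * \sum_(i <- r) y i ^+ 2.
Proof.
have := sqr_sum_mul_le r y (fun _ => 1).
under eq_bigr do rewrite mulr1.
under [X in _ <= _ * X]eq_bigr do rewrite expr1n.
by rewrite big_const_seq count_predT iter_addr_0 mulrC.
Qed.

Lemma ler_sum_nat_window {R : numDomainType} (f g : nat -> R) (a lo hi b : nat) :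
    (a <= lo <= hi)%N -> (hi <= b)%N ->
    (forall t, (a <= t < lo)%N || (hi <= t < b)%N -> f t = g t) ->
    \sum_(lo <= t < hi) f t <= \sum_(lo <= t < hi) g t ->
  \sum_(a <= t < b) f t <= \sum_(a <= t < b) g t.
Proof.
move=> /andP[a_lo lo_hi] hi_b f_eq_g window.
have lo_b := leq_trans lo_hi hi_b.
rewrite !(big_cat_nat (n := lo) (m := a) (p := b)) //.
rewrite !(big_cat_nat (n := hi) (m := lo) (p := b)) //=.
rewrite !addrA; apply: lerD; first apply: lerD => //.
all: by apply: ler_sum_nat => t t_in; rewrite f_eq_g // t_in ?orbT.
Qed.

Section Norm2.
Context {R : rcfType} {d : nat}.
Implicit Types (a b v : 'rV[R]_d).

Lemma norm2_ge0 v : 0 <= norm2 v.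
Proof. exact: sqrtr_ge0. Qed.

Lemma sqr_norm2 v : norm2 v ^+ 2 = \sum_(j < d) v ord0 j ^+ 2.
Proof. by rewrite sqr_sqrtr // sumr_ge0 // => j _; exact: sqr_ge0. Qed.

Lemma norm2Z (c : R) v : norm2 (c *: v) = `|c| * norm2 v.
Proof.
rewrite /norm2 -sqrtr_sqr -sqrtrM ?sqr_ge0 // mulr_sumr.
by congr Num.sqrt; apply: eq_bigr => j _; rewrite mxE exprMn.
Qed.

Lemma norm2_0 : norm2 (0 : 'rV[R]_d) = 0.
Proof. by rewrite -(scale0r 0) norm2Z normr0 mul0r. Qed.

Lemma norm2Mn v n : norm2 (v *+ n) = norm2 v *+ n.
Proof. by rewrite -scaler_nat norm2Z normr_nat mulr_natl. Qed.

Lemma norm2_distC a b : norm2 (a - b) = norm2 (b - a).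
Proof. by rewrite -opprB -scaleN1r norm2Z normrN normr1 mul1r. Qed.

Lemma dot_le_mul_norm2 a b :
  \sum_(j < d) a ord0 j * b ord0 j <= norm2 a * norm2 b.
Proof.
apply: le_trans (ler_norm _) _.
rewrite -ler_sqr ?nnegrE ?normr_ge0 ?mulr_ge0 ?norm2_ge0 //.
by rewrite exprMn !sqr_norm2 real_normK ?num_real ?sqr_sum_mul_le.
Qed.

Lemma ler_norm2D a b : norm2 (a + b) <= norm2 a + norm2 b.
Proof.
rewrite -ler_sqr ?nnegrE ?addr_ge0 ?norm2_ge0 //.
have -> : norm2 (a + b) ^+ 2 =
    norm2 a ^+ 2 + norm2 b ^+ 2 + 2 * \sum_(j < d) a ord0 j * b ord0 j.
  rewrite !sqr_norm2 mulr_sumr -!big_split /=.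
  by apply: eq_bigr => j _; rewrite mxE; ring.
have := dot_le_mul_norm2 a b; lra.
Qed.

Lemma ler_norm2_sum (I : Type) (r : seq I) (F : I -> 'rV[R]_d) :
  norm2 (\sum_(i <- r) F i) <= \sum_(i <- r) norm2 (F i).
Proof.
elim/big_rec2: _ => [|i y1 y2 _ IH]; first by rewrite norm2_0.
by apply: le_trans (ler_norm2D _ _) _; rewrite lerD2l.
Qed.

Lemma ler_norm2_sub_steps (u : nat -> 'rV[R]_d) i j : (i <= j)%N ->
  norm2 (u j - u i) <= \sum_(i <= t < j) norm2 (u t.+1 - u t).
Proof.
move=> /subnK <-; elim: (j - i)%N => [|n IH].
  by rewrite add0n subrr norm2_0 big_geq.
rewrite addSn big_nat_recr ?leq_addl //= addrC.
have -> : u (n + i).+1 - u i = u (n + i).+1 - u (n + i)%N + (u (n + i)%N - u i).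
  by rewrite addrA subrK.
by apply: le_trans (ler_norm2D _ _) _; rewrite lerD.
Qed.

End Norm2.

Definition vmean {R : rcfType} {d : nat} {I : Type} (r : seq I) (x : I -> 'rV[R]_d)
  : 'rV[R]_d := (size r)%:R^-1 *: \sum_(i <- r) x i.

Section VectorMean.
Context {R : rcfType} {d : nat} {I : Type} (r : seq I) (x : I -> 'rV[R]_d).
Hypothesis size_r_gt0 : (0 < size r)%N.

Lemma vmean_mulrn : vmean r x *+ size r = \sum_(i <- r) x i.
Proof. by rewrite -scaler_nat scalerA mulfV ?scale1r // pnatr_eq0 -lt0n. Qed.

Lemma norm2_vmean_sub_le c :
  norm2 (vmean r x - c) *+ size r <= \sum_(i <- r) norm2 (x i - c).
Proof.
rewrite -norm2Mn mulrnBl vmean_mulrn -[c *+ _]iter_addr_0 -count_predT.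
by rewrite -big_const_seq -sumrB ler_norm2_sum.
Qed.

Lemma sqr_norm2_vmean_sub_le c :
  norm2 (vmean r x - c) ^+ 2 *+ size r <= \sum_(i <- r) norm2 (x i - c) ^+ 2.
Proof.
rewrite -(ler_pMn2r size_r_gt0) -mulrnA -exprMn_n -[X in _ <= X]mulr_natl.
apply: le_trans (sqr_sum_le_size r _).
rewrite ler_sqr ?nnegrE ?mulrn_wge0 ?norm2_ge0 ?sumr_ge0 ?norm2_vmean_sub_le //.
by move=> i _; exact: norm2_ge0.
Qed.

End VectorMean.

Section LocalAverage.
Context {R : rcfType} {d : nat} (u : nat -> 'rV[R]_d) (k tau : nat).
Hypothesis k_gt0 : (0 < k)%N.

Let w := local_avg u k tau.
Let m := vmean (index_iota 1 k.+1) (fun i => u (tau + i)%N).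

Lemma size_index_iota_block : size (index_iota 1 k.+1) = k.
Proof. by rewrite size_iota subn1. Qed.

Lemma local_avg_in t : (tau < t <= tau + k)%N -> w t = m.
Proof. by move=> t_in; rewrite /w /local_avg t_in /m /vmean size_index_iota_block. Qed.

Lemma local_avg_out t : ~~ (tau < t <= tau + k)%N -> w t = u t.
Proof. by move=> /negbTE t_out; rewrite /w /local_avg t_out. Qed.

Lemma norm2_block_mean_le c :
  norm2 (m - c) *+ k <= \sum_(1 <= i < k.+1) norm2 (u (tau + i)%N - c).
Proof.
have := norm2_vmean_sub_le (index_iota 1 k.+1) (fun i => u (tau + i)%N) _ c.
by rewrite size_index_iota_block; apply.
Qed.

Lemma sqr_norm2_block_mean_le c :
  norm2 (m - c) ^+ 2 *+ k <= \sum_(1 <= i < k.+1) norm2 (u (tau + i)%N - c) ^+ 2.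
Proof.
have := sqr_norm2_vmean_sub_le (index_iota 1 k.+1) (fun i => u (tau + i)%N) _ c.
by rewrite size_index_iota_block; apply.
Qed.

Lemma sum_block_shift {V : nmodType} (F : nat -> V) :
  \sum_(tau.+1 <= t < (tau + k).+1) F t = \sum_(1 <= i < k.+1) F (tau + i)%N.
Proof.
rewrite -(add1n tau) big_addn (_ : _ - tau = k.+1)%N; last by lia.
by apply: eq_bigr => i _; rewrite addnC.
Qed.

Lemma block_mean_mulrn : m *+ k = \sum_(1 <= i < k.+1) u (tau + i)%N.
Proof. by rewrite -[in LHS]size_index_iota_block vmean_mulrn ?size_index_iota_block. Qed.

(* [p] ([q]) tells whether the jump into (out of) the block, at t = tau
   (t = tau + k), is one of the summed differences; [lo p, hi q) is then the
   range where the differences of w and u may differ. *)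
Let lo (p : bool) := if p then tau else tau.+1.
Let hi (q : bool) := if q then (tau + k).+1 else (tau + k)%N.

Lemma variation_window_local_avg (p q : bool) :
  \sum_(lo p <= t < hi q) norm2 (w t.+1 - w t)
    = (if p then norm2 (m - u tau) else 0)
      + (if q then norm2 (u (tau + k).+1 - m) else 0).
Proof.
have interior : \sum_(tau.+1 <= t < tau + k) norm2 (w t.+1 - w t) = 0.
  rewrite big_nat_cond big1 // => t /andP[t_in _].
  by rewrite !local_avg_in ?subrr ?norm2_0 //; lia.
have -> : \sum_(lo p <= t < hi q) norm2 (w t.+1 - w t)
    = (if p then norm2 (w tau.+1 - w tau) else 0)
      + \sum_(tau.+1 <= t < hi q) norm2 (w t.+1 - w t).
  by rewrite /lo; case: p; rewrite ?add0r // big_ltn // /hi; case: q; lia.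
have -> : \sum_(tau.+1 <= t < hi q) norm2 (w t.+1 - w t)
    = \sum_(tau.+1 <= t < tau + k) norm2 (w t.+1 - w t)
      + (if q then norm2 (w (tau + k).+1 - w (tau + k)%N) else 0).
  by rewrite /hi; case: q; rewrite ?addr0 // big_nat_recr //=; lia.
rewrite interior add0r; congr (_ + _).
  by case: p => //; rewrite local_avg_in ?local_avg_out //; lia.
by case: q => //; rewrite local_avg_out ?local_avg_in //; lia.
Qed.

Lemma variation_window_le (p q : bool) :
  \sum_(lo p <= t < hi q) norm2 (w t.+1 - w t)
    <= \sum_(lo p <= t < hi q) norm2 (u t.+1 - u t).
Proof.
rewrite variation_window_local_avg -(ler_pMn2r k_gt0) mulrnDl.
have detour i : (1 <= i < k.+1)%N ->
    (if p then norm2 (u (tau + i)%N - u tau) else 0)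
    + (if q then norm2 (u (tau + k).+1 - u (tau + i)%N) else 0)
    <= \sum_(lo p <= t < hi q) norm2 (u t.+1 - u t).
  move=> i_in; rewrite (big_cat_nat (n := (tau + i)%N)) /=; first last.
  - by rewrite /hi; case: q; lia.
  - by rewrite /lo; case: p; lia.
  have steps_ge0 a b : 0 <= \sum_(a <= t < b) norm2 (u t.+1 - u t).
    by apply: sumr_ge0 => t _; exact: norm2_ge0.
  apply: lerD; [rewrite /lo; case: p | rewrite /hi; case: q] => //.
    by apply: (ler_norm2_sub_steps u tau); lia.
  by apply: (ler_norm2_sub_steps u (tau + i)); lia.
apply: le_trans (_ : _ <= \sum_(1 <= i < k.+1) _) _; last first.
  by apply: le_trans (ler_sum_nat detour) _; rewrite sumr_const_nat subn1.
clear detour; rewrite big_split /=; apply: lerD.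
  by case: p; [exact: norm2_block_mean_le | rewrite mul0rn big1].
case: q; last by rewrite mul0rn big1.
rewrite norm2_distC; under eq_bigr do rewrite norm2_distC.
exact: norm2_block_mean_le.
Qed.

Variable T : nat.
Hypothesis block_le : (tau + k <= T)%N.

Lemma variation_local_avg_le :
  \sum_(1 <= t < T) norm2 (w t.+1 - w t) <= \sum_(1 <= t < T) norm2 (u t.+1 - u t).
Proof.
apply: (ler_sum_nat_window _ _ _ (lo (0 < tau)%N) (hi (tau + k < T)%N));
  last exact: variation_window_le.
- by rewrite /lo /hi; case: (ltnP 0 tau) => ?; case: (ltnP (tau + k) T) => ? /=; lia.
- by rewrite /hi; case: (ltnP (tau + k) T) => ? /=; lia.
move=> t; rewrite /lo /hi.
case: (ltnP 0 tau) => ?; case: (ltnP (tau + k) T) => ? /= /orP[] ?.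
all: by rewrite !local_avg_out //; lia.
Qed.

Lemma sum_split_block {V : nmodType} (F : nat -> V) :
  \sum_(1 <= t < T.+1) F t = \sum_(1 <= t < tau.+1) F t
    + \sum_(tau.+1 <= t < (tau + k).+1) F t + \sum_((tau + k).+1 <= t < T.+1) F t.
Proof.
rewrite -(big_cat_nat (n := tau.+1)) // -?(big_cat_nat (n := (tau + k).+1)) //; lia.
Qed.

Lemma sum_local_avg {V : nmodType} (phi : 'rV[R]_d -> V) :
  \sum_(1 <= t < T.+1) phi (w t) + \sum_(1 <= i < k.+1) phi (u (tau + i)%N)
    = \sum_(1 <= t < T.+1) phi (u t) + phi m *+ k.
Proof.
rewrite !sum_split_block -(sum_block_shift (fun t => phi (u t))).
have -> : \sum_(tau.+1 <= t < (tau + k).+1) phi (w t) = phi m *+ k.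
  rewrite (eq_big_nat _ _ (F2 := fun=> phi m)) => [|t t_in]; last first.
    by rewrite local_avg_in //; lia.
  by rewrite sumr_const_nat subSS addKn.
have outside a b : (b <= tau.+1)%N || ((tau + k).+1 <= a)%N ->
    \sum_(a <= t < b) phi (w t) = \sum_(a <= t < b) phi (u t).
  by move=> ab; apply: eq_big_nat => t t_in; rewrite local_avg_out //; lia.
rewrite !outside ?leqnn ?orbT //.
set B := \sum_(tau.+1 <= t < _) _.
by rewrite -!addrA (addrC (phi m *+ k)) [_ + B]addrC -!addrA.
Qed.

Lemma ler_sum_local_avg (phi : 'rV[R]_d -> R) :
    phi m *+ k <= \sum_(1 <= i < k.+1) phi (u (tau + i)%N) ->
  \sum_(1 <= t < T.+1) phi (w t) <= \sum_(1 <= t < T.+1) phi (u t).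
Proof. by move=> jensen; rewrite -(lerD2r (phi m *+ k)) -sum_local_avg lerD2l. Qed.

Lemma seq_mean_local_avg : seq_mean w T = seq_mean u T.
Proof.
rewrite /seq_mean; congr (_ *: _).
by apply: (addIr (m *+ k)); rewrite -(sum_local_avg id) block_mean_mulrn.
Qed.

End LocalAverage.

Theorem lemma10 (R : rcfType) (d T k tau : nat) (u : nat -> 'rV[R]_d)
    (hk1 : (1 <= k)%N) (hkT : (k <= T)%N) (htau : (tau <= T - k)%N) :
  let w := local_avg u k tau in
  let ub := seq_mean u T in
  let wb := seq_mean w T in
  [/\ \sum_(1 <= t < T) norm2 (w t.+1 - w t)
        <= \sum_(1 <= t < T) norm2 (u t.+1 - u t),
      \sum_(1 <= t < T.+1) norm2 (w t - wb)
        <= \sum_(1 <= t < T.+1) norm2 (u t - ub),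
      \sum_(1 <= t < T.+1) norm2 (w t - wb) ^+ 2
        <= \sum_(1 <= t < T.+1) norm2 (u t - ub) ^+ 2,
      \sum_(1 <= t < T.+1) norm2 (w t)
        <= \sum_(1 <= t < T.+1) norm2 (u t)
    & \sum_(1 <= t < T.+1) norm2 (w t) ^+ 2
        <= \sum_(1 <= t < T.+1) norm2 (u t) ^+ 2].
Proof.
move=> w ub wb.
have block_le : (tau + k <= T)%N by lia.
have sum_le := ler_sum_local_avg u k tau hk1 T block_le.
have block_mean_le := norm2_block_mean_le u k tau hk1.
have sqr_block_mean_le := sqr_norm2_block_mean_le u k tau hk1.
rewrite /wb seq_mean_local_avg //; split.
- exact: variation_local_avg_le.
- exact: sum_le (fun v => norm2 (v - ub)) (block_mean_le ub).
- exact: sum_le (fun v => norm2 (v - ub) ^+ 2) (sqr_block_mean_le ub).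
- apply: (sum_le (fun v => norm2 v)); have := block_mean_le 0.
  by rewrite subr0; under eq_bigr do rewrite subr0.
- apply: (sum_le (fun v => norm2 v ^+ 2)); have := sqr_block_mean_le 0.
  by rewrite subr0; under eq_bigr do rewrite subr0.
Qed.
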